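(* Let $\nu_1,\dots,\nu_\beta$ be the centers returned by an $\alpha$-approximation clustering algorithm (as in the context), and suppose $|\mu_r-\mu_s|\ge c\,\phi_\ast\left(\frac1{n_s}+\frac1{n_r}\right)$ for all distinct $r,s$. Then for every $\mathcal T_s$ there exists a center $\nu_s$ with $$|\nu_s-\mu_s|\le 2(\alpha+1)\frac{\phi_\ast}{n_s},$$ and, with the centers so labeled, $\gamma<\frac{2(\alpha+1)}{c}$.
   Context: Points $x_1,\dots,x_N$ are real numbers, each drawn independently from one of $\beta$ distributions with means $\mu_1,\dots,\mu_\beta$; $\mathcal T_s$ is the set of points from distribution $s$, $n_s=|\mathcal T_s|$; $\phi_\ast=\sum_i|x_i-\mathbb{E}(x_i)|$; $c>0$ a constant; $g(S)=\frac1{|S|}\sum_{x\in S}x$. The $\alpha$-approximation algorithm returns $\beta$ centers; $C(x)$ denotes the center of the cluster containing $x$, and the returned centers satisfy $\sum_i|x_i-C(x_i)|\le\alpha\cdot\mathrm{OPT}$, where $\mathrm{OPT}$ is the minimum of this cost over all choices of $\beta$ centers with points assigned to clusters. Define $\Delta_s=|\mu_s-\nu_s|$ and $\gamma=\max_{s,\,r\ne s}\frac{\Delta_s}{|\mu_r-\mu_s|}$. *)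

From HB Require Import structures.
From mathcomp Require Import all_boot all_order all_algebra.
From mathcomp Require Import classical_sets reals.
Set Implicit Arguments. Unset Strict Implicit. Unset Printing Implicit Defensive.
Import Order.TTheory GRing.Theory Num.Theory.
Local Open Scope ring_scope.
Local Open Scope classical_set_scope.

Definition kcost (R : realType) (N beta : nat) (x : 'I_N -> R)
  (c : 'I_beta -> R) (sigma : 'I_N -> 'I_beta) : R :=
  \sum_(i < N) `|x i - c (sigma i)|.

Definition OPT (R : realType) (N beta : nat) (x : 'I_N -> R) : R :=
  inf [set r : R | exists (c : 'I_beta -> R) (sigma : 'I_N -> 'I_beta),
                     r = kcost x c sigma].

(* phi_* = sum_i |x_i - E(x_i)|, with E(x_i) = mu_(lab i) *)
Definition phistar (R : realType) (N beta : nat) (x : 'I_N -> R)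
  (lab : 'I_N -> 'I_beta) (mu : 'I_beta -> R) : R :=
  \sum_(i < N) `|x i - mu (lab i)|.

Definition nsize (N beta : nat) (lab : 'I_N -> 'I_beta) (s : 'I_beta) : nat :=
  #|[set i | lab i == s]|.

(* gamma = max_{s, r <> s} Delta_s / |mu_r - mu_s|, Delta_s = |mu_s - nu_s|
   (all ratios are >= 0, so 0 is a neutral default for the max) *)
Definition gamma (R : realType) (beta : nat) (mu nu : 'I_beta -> R) : R :=
  \big[Num.max/0]_(s < beta) \big[Num.max/0]_(r < beta | r != s)
     (`|mu s - nu s| / `|mu r - mu s|).

From HB Require Import structures.
From mathcomp Require Import all_boot all_order all_algebra.
From mathcomp Require Import boolp classical_sets reals.
From mathcomp Require Import lra.
Import Order.TTheory GRing.Theory Num.Theory.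
Local Open Scope ring_scope.

(* For i in T_s the triangle inequality gives
   |C(x_i) - mu_s| <= |x_i - mu_s| + |x_i - C(x_i)|, so summing over T_s the
   returned center nu_s nearest to mu_s satisfies
   n_s |nu_s - mu_s| <= phi_* + alpha OPT <= (alpha + 1) phi_*,
   since the true means with the true labels form an admissible clustering.
   Against the separation |mu_r - mu_s| >= c phi_* / n_s this bounds every
   ratio in gamma by (alpha + 1) / c; the factor 2 of the statement is slack. *)

Section KMedianCost.
Set Implicit Arguments. Unset Strict Implicit.

Variables (R : realType) (N beta : nat) (x : 'I_N -> R).

Lemma kcost_ge0 (c : 'I_beta -> R) (sigma : 'I_N -> 'I_beta) :
  0 <= kcost x c sigma.
Proof. by apply: sumr_ge0 => i _. Qed.

Lemma OPT_le_kcost (c : 'I_beta -> R) (sigma : 'I_N -> 'I_beta) :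
  OPT beta x <= kcost x c sigma.
Proof.
apply: ge_inf; last by exists c, sigma.
by exists 0 => _ [c' [sigma' ->]]; exact: kcost_ge0.
Qed.

Variables (lab : 'I_N -> 'I_beta) (mu : 'I_beta -> R).

Lemma phistar_ge0 : 0 <= phistar x lab mu.
Proof. exact: kcost_ge0. Qed.

Lemma OPT_le_phistar : OPT beta x <= phistar x lab mu.
Proof. exact: OPT_le_kcost. Qed.

Lemma nsizeE (s : 'I_beta) : (nsize lab s)%:R = \sum_(i | lab i == s) (1 : R).
Proof.
rewrite sumr_const; congr _%:R; apply: eq_card => i.
by rewrite /in_mem /= /in_set asboolb.
Qed.

Variables (nu : 'I_beta -> R) (asg : 'I_N -> 'I_beta).

Lemma nearest_center_dist (s j : 'I_beta) :
  (forall k, `|nu j - mu s| <= `|nu k - mu s|) ->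
  `|nu j - mu s| * (nsize lab s)%:R <= phistar x lab mu + kcost x nu asg.
Proof.
move=> nearest; rewrite nsizeE mulr_sumr.
have point_bound i : lab i == s ->
    `|nu j - mu s| * 1 <= `|x i - mu (lab i)| + `|x i - nu (asg i)|.
  move=> /eqP ->; rewrite mulr1 (le_trans (nearest (asg i))) //.
  by rewrite (le_trans (ler_distD (x i) _ _)) // addrC (distrC (nu _)).
apply: le_trans (ler_sum _ point_bound) _.
rewrite /phistar /kcost -big_split [leRHS](bigID (fun i => lab i == s)) /=.
by rewrite lerDl sumr_ge0 // => i _; rewrite addr_ge0.
Qed.

Lemma nearest_center_close (alpha : R) (s j : 'I_beta) :
  0 <= alpha -> kcost x nu asg <= alpha * OPT beta x ->
  (forall k, `|nu j - mu s| <= `|nu k - mu s|) ->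
  `|nu j - mu s| * (nsize lab s)%:R <= (alpha + 1) * phistar x lab mu.
Proof.
move=> alpha_ge0 approx nearest.
apply: le_trans (nearest_center_dist nearest) _.
rewrite mulrDl mul1r addrC lerD2r (le_trans approx) //.
by rewrite ler_wpM2l // OPT_le_phistar.
Qed.

End KMedianCost.

Lemma ratio_le_of_separation (R : realFieldType) {c A phi n m D E : R} :
  0 < c -> 0 <= A -> 0 < n -> 0 < m -> 0 <= phi ->
  D * n <= A * phi -> c * phi * (n^-1 + m^-1) <= E -> D / E <= A / c.
Proof.
move=> c_gt0 A_ge0 n_gt0 m_gt0 phi_ge0 Dn_le sep.
have [->|E_neq0] := eqVneq E 0; first by rewrite invr0 mulr0 divr_ge0 // ltW.
have E_gt0 : 0 < E.
  rewrite lt_def E_neq0 (le_trans _ sep) //.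
  by rewrite !mulr_ge0 ?addr_ge0 ?invr_ge0 // ltW.
rewrite ler_pdivrMr // mulrAC ler_pdivlMr //.
have D_le : D <= A * phi / n by rewrite ler_pdivlMr.
have m_term : 0 <= A * c * phi / m by rewrite !mulr_ge0 // ?invr_ge0 ltW.
apply: le_trans (ler_wpM2r (ltW c_gt0) D_le) _.
apply: le_trans (ler_wpM2l A_ge0 sep); lra.
Qed.

Lemma gamma_le (R : realType) {beta : nat} {mu nu : 'I_beta -> R} (K : R) :
  0 <= K -> (forall s r, r != s -> `|mu s - nu s| / `|mu r - mu s| <= K) ->
  gamma mu nu <= K.
Proof. by move=> K_ge0 ratio_le; do 2 apply: bigmax_le => // ? ?; exact: ratio_le. Qed.

Theorem lemma7 (R : realType) (N beta : nat) (x : 'I_N -> R)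
  (lab : 'I_N -> 'I_beta) (mu : 'I_beta -> R) (c alpha : R)
  (nu : 'I_beta -> R) (asg : 'I_N -> 'I_beta) :
  0 < c -> 1 <= alpha ->
  (forall s : 'I_beta, (0 < nsize lab s)%N) ->
  kcost x nu asg <= alpha * OPT beta x ->
  (forall r s : 'I_beta, r != s ->
     c * phistar x lab mu * ((nsize lab s)%:R^-1 + (nsize lab r)%:R^-1)
       <= `|mu r - mu s|) ->
  exists pi : 'I_beta -> 'I_beta,
    (forall s : 'I_beta,
       `|nu (pi s) - mu s| <= 2 * (alpha + 1) * phistar x lab mu / (nsize lab s)%:R)
    /\ gamma mu (fun s => nu (pi s)) < 2 * (alpha + 1) / c.
Proof.
move=> c_gt0 alpha_ge1 nsize_gt0 approx sep.
have alpha_ge0 : 0 <= alpha by lra.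
pose pi s := [arg min_(j < s) `|nu j - mu s|]%O.
have close s : `|nu (pi s) - mu s| * (nsize lab s)%:R <= (alpha + 1) * phistar x lab mu.
  apply: nearest_center_close alpha_ge0 approx _.
  by rewrite /pi; case: (arg_minP _ (isT : predT s)) => j _ nearest k; apply: nearest.
have phi_ge0 := phistar_ge0 x lab mu.
exists pi; split=> [s|].
  rewrite ler_pdivlMr ?ltr0n // (le_trans (close s)) // -mulrA ler_peMl //.
    by rewrite mulr_ge0 //; lra.
  by lra.
have gamma_bound : gamma mu (fun s => nu (pi s)) <= (alpha + 1) / c.
  apply: gamma_le => [|s r r_neq_s]; first by rewrite divr_ge0 //; lra.
  apply: ratio_le_of_separation (sep r s r_neq_s) => //; rewrite ?ltr0n //.
  - by lra.
  - by rewrite distrC.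
by apply: le_lt_trans gamma_bound _; rewrite ltr_pM2r ?invr_gt0 //; lra.
Qed.
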